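(* Let $G=([N],E)$ be a graph with anti-ferromagnetic Ising potentials (parameters $\beta>0$, $B\in\mathbb{R}$), and let $e=(i,k)$ be an edge with $i,k\in[N]$, added with the Ising edge potential; $G+e$ denotes the resulting graph. Then $$H(G+e)=\begin{cases}H(G)+\beta,& \text{if } i\not\stackrel{0}{\sim}k;\\ H_{m+1}+\beta,&\text{if } i\stackrel{m}{\sim}k \text{ but } i\not\stackrel{m+1}{\sim}k \text{ for some } m\le M-1;\\ H(G)-\beta,&\text{if } i\stackrel{m}{\sim}k \text{ for all } m\le M.\end{cases}$$
   Context: Anti-ferromagnetic Ising model: $\chi=\{0,1\}$, node potentials $H_i(0)=-B$, $H_i(1)=B$, edge potentials $H_e(x,y)=-\beta$ if $x=y$ and $\beta$ if $x\ne y$; $H(x)=\sum_iH_i(x_i)+\sum_{e\in E}H_e(x_e)$ for $x\in\{0,1\}^N$, $H(G)=\max_xH(x)$. Let $H_0=H(G)$ and, recursively, $H_m=\max\{H(x):H(x)<H_{m-1}\}$, so $H_0>H_1>\cdots$ are the distinct values of $H(x)$ over $x\in\{0,1\}^N$ in decreasing order. Let $M$ be the largest index $m$ with $H_m\ge H(G)-2\beta$ (if all values satisfy this, $M$ is the index of the smallest value). Let $\mathcal{C}_m=\{x:H(x)=H_m\}$. For $m\le M$, write $i\stackrel{m}{\sim}k$ iff $x_i=x_k$ for all $x\in\mathcal{C}_0\cup\dots\cup\mathcal{C}_m$. *)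

From HB Require Import structures.
From mathcomp Require Import all_boot all_order all_algebra.
Set Implicit Arguments. Unset Strict Implicit. Unset Printing Implicit Defensive.
Import Order.TTheory GRing.Theory Num.Theory.
Local Open Scope ring_scope.

(* A spin configuration x in {0,1}^N, encoded as booleans (true = 1). *)
Definition config (N : nat) := {ffun 'I_N -> bool}.

Section Ising.
Variables (R : realFieldType) (N : nat) (beta B : R).

Definition Hnode (b : bool) : R := if b then B else - B.
Definition Hedge (a b : bool) : R := if a == b then - beta else beta.

Definition Hx (E : seq ('I_N * 'I_N)) (x : config N) : R :=
  \sum_(i < N) Hnode (x i) + \sum_(e <- E) Hedge (x e.1) (x e.2).

Definition all_false : config N := [ffun => false].

Definition HG (E : seq ('I_N * 'I_N)) : R :=
  \big[Num.max/Hx E all_false]_(x : config N) Hx E x.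

Definition Hvals (E : seq ('I_N * 'I_N)) : seq R :=
  sort (fun a b => b <= a) (undup [seq Hx E x | x : config N]).

Definition Hm (E : seq ('I_N * 'I_N)) (m : nat) : R := nth 0 (Hvals E) m.

Definition sim (E : seq ('I_N * 'I_N)) (m : nat) (i k : 'I_N) : Prop :=
  forall x : config N, (exists2 j : nat, (j <= m)%N & Hx E x = Hm E j) ->
    x i = x k.

End Ising.

(* Adding the edge (i, k) shifts the energy of every configuration x by
   -beta when x_i = x_k and by +beta otherwise.  So H(G+e) is the larger of
   beta plus the best energy of a configuration separating i and k, and the
   best energy H(G) - beta of a configuration not separating them.  Level
   H_m is reached by a separating configuration exactly when i and k are not
   m-equivalent, and only levels down to H(G) - 2 beta can beat H(G) - beta. *)

From mathcomp Require Import all_boot all_order all_algebra.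
From mathcomp Require Import lra.
Set Implicit Arguments. Unset Strict Implicit. Unset Printing Implicit Defensive.
Import Order.TTheory GRing.Theory Num.Theory.
Local Open Scope ring_scope.

Section EnergyLevels.
Variables (R : realFieldType) (N : nat) (beta B : R) (E : seq ('I_N * 'I_N)).
Implicit Types (x y : config N) (i k : 'I_N).

Local Notation Hx := (Hx beta B E).
Local Notation HG := (HG beta B E).
Local Notation Hm := (Hm beta B E).
Local Notation Hvals := (Hvals beta B E).

Lemma Hx_in_Hvals x : Hx x \in Hvals.
Proof. by rewrite /Hvals mem_sort mem_undup; apply: image_f. Qed.

Lemma Hx_level x : exists2 j, (j < size Hvals)%N & Hm j = Hx x.
Proof.
exists (index (Hx x) Hvals); first by rewrite index_mem Hx_in_Hvals.
by rewrite /Hm nth_index // Hx_in_Hvals.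
Qed.

Lemma Hm_attained j : (j < size Hvals)%N -> exists x, Hx x = Hm j.
Proof.
move=> /(mem_nth 0); rewrite /Hm; move: (nth _ _ _) => v.
by rewrite /Hvals mem_sort mem_undup => /imageP [x _ ->]; exists x.
Qed.

Lemma Hm_nonincreasing j l : (j <= l)%N -> (l < size Hvals)%N -> Hm l <= Hm j.
Proof.
move=> le_jl lt_l.
apply: (sorted_leq_nth (leT := fun a b : R => b <= a)) => //.
- by move=> a b c h1 h2; exact: le_trans h2 h1.
- by apply: sort_sorted => a b; exact: le_total.
- by rewrite inE (leq_ltn_trans le_jl lt_l).
Qed.

Lemma Hm_decreasing j l : (j < l)%N -> (l < size Hvals)%N -> Hm l < Hm j.
Proof.
move=> lt_jl lt_l; rewrite lt_neqAle Hm_nonincreasing ?(ltnW lt_jl) // andbT.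
rewrite /Hm nth_uniq ?(ltn_trans lt_jl lt_l) //; last first.
  by rewrite /Hvals sort_uniq undup_uniq.
by rewrite eq_sym neq_ltn lt_jl.
Qed.

Lemma Hx_le_HG x : Hx x <= HG.
Proof. by rewrite /HG (bigD1 x) //= le_max lexx. Qed.

Lemma HG_attained : exists x, HG = Hx x.
Proof.
rewrite /HG; apply: (big_ind (fun v => exists x, v = Hx x)).
- by exists (all_false N).
- move=> _ _ [xa ->] [xb ->].
  by case: (leP (Hx xa) (Hx xb)); [exists xb | exists xa].
- by move=> x _; exists x.
Qed.

Lemma HG_eq_Hm0 : (0 < size Hvals)%N -> HG = Hm 0.
Proof.
move=> size_gt0; have [x HGx] := HG_attained; have [j lt_j Hmj] := Hx_level x.
case: j lt_j Hmj => [|j] lt_j Hmj; first by rewrite HGx Hmj.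
have [y Hy] := Hm_attained size_gt0.
have := Hm_decreasing (ltn0Sn j) lt_j; have := Hx_le_HG y.
by rewrite Hy HGx -Hmj => /le_lt_trans h /h; rewrite ltxx.
Qed.

Lemma HG_eq_of_ub v : (forall x, Hx x <= v) -> (exists x, Hx x = v) -> HG = v.
Proof.
move=> ub [y Hy]; have [x HGx] := HG_attained.
by apply/le_anti/andP; split; [rewrite HGx; exact: ub | rewrite -Hy; exact: Hx_le_HG].
Qed.

Lemma not_sim_witness m i k : ~ sim beta B E m i k ->
  exists x j, [/\ (j <= m)%N, Hx x = Hm j & x i != x k].
Proof.
move=> not_sim.
case: (boolP [exists x : config N, [exists j : 'I_m.+1,
    (Hx x == Hm j) && (x i != x k)]]).
- move=> /existsP [x /existsP [j /andP [/eqP Hxj ne_ik]]].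
  by exists x, j; split => //; rewrite -ltnS.
- move=> none; exfalso; apply: not_sim => x [j le_jm Hxj].
  apply/eqP; apply: contraNT none => ne_ik.
  apply/existsP; exists x; apply/existsP; exists (Ordinal (le_jm : (j < m.+1)%N)).
  by rewrite /= Hxj eqxx ne_ik.
Qed.

Lemma level_gt_of_sim m i k y : sim beta B E m i k -> y i != y k ->
  exists2 j, (m < j < size Hvals)%N & Hm j = Hx y.
Proof.
move=> sim_m ne_ik; have [j lt_j Hmj] := Hx_level y.
exists j => //; rewrite lt_j andbT ltnNge; apply/negP => le_jm.
by move/eqP: ne_ik; apply; apply: sim_m; exists j.
Qed.

Lemma Hx_le_Hm_succ_of_sim m i k y : sim beta B E m i k -> y i != y k ->
  Hx y <= Hm m.+1.
Proof.
move=> sim_m ne_ik; have [j /andP [lt_mj lt_j] <-] := level_gt_of_sim sim_m ne_ik.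
exact: Hm_nonincreasing.
Qed.

End EnergyLevels.

Section EdgeAddition.
Variables (R : realFieldType) (N : nat) (beta B : R) (E : seq ('I_N * 'I_N)).
Variables i k : 'I_N.

Lemma Hx_cons x :
  Hx beta B ((i, k) :: E) x = Hx beta B E x + Hedge beta (x i) (x k).
Proof. by rewrite /Hx big_cons /= [Hedge _ _ _ + _]addrC addrA. Qed.

Lemma HG_cons_eq v :
  (forall x : config N, x i = x k -> Hx beta B E x - beta <= v) ->
  (forall x : config N, x i != x k -> Hx beta B E x + beta <= v) ->
  (exists x, Hx beta B ((i, k) :: E) x = v) ->
  HG beta B ((i, k) :: E) = v.
Proof.
move=> ub_eq ub_ne; apply: HG_eq_of_ub => x; rewrite Hx_cons /Hedge.
by case: eqVneq => [/ub_eq|/ub_ne].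
Qed.

End EdgeAddition.

Theorem lemma1 (R : realFieldType) (N : nat) (beta B : R)
    (E : seq ('I_N * 'I_N)) (i k : 'I_N) (M : nat) :
  0 < beta ->
  (* M is the largest index m with H_m >= H(G) - 2 beta *)
  (M < size (Hvals beta B E))%N ->
  HG beta B E - 2 * beta <= Hm beta B E M ->
  (forall m, (m < size (Hvals beta B E))%N ->
      HG beta B E - 2 * beta <= Hm beta B E m -> (m <= M)%N) ->
  [/\ (~ sim beta B E 0 i k ->
         HG beta B ((i, k) :: E) = HG beta B E + beta),
      (forall m : nat, (m <= M - 1)%N -> (0 < M)%N ->
         sim beta B E m i k -> ~ sim beta B E m.+1 i k ->
         HG beta B ((i, k) :: E) = Hm beta B E m.+1 + beta)
    & ((forall m : nat, (m <= M)%N -> sim beta B E m i k) ->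
         HG beta B ((i, k) :: E) = HG beta B E - beta)].
Proof.
move=> beta_gt0 lt_M_size HM_ge maxM.
have HG_Hm0 := HG_eq_Hm0 (leq_ltn_trans (leq0n M) lt_M_size).
have HG_ub := Hx_le_HG beta B E.
split.
- move=> /not_sim_witness [x [j [+ Hxj ne_ik]]]; rewrite leqn0 => /eqP j0.
  apply: HG_cons_eq => [y _|y _|]; rewrite ?Hx_cons; try by have := HG_ub y; lra.
  by exists x; rewrite Hx_cons /Hedge (negbTE ne_ik) Hxj j0 -HG_Hm0.
- move=> m le_m M_gt0 sim_m /not_sim_witness [x [j [le_j Hxj ne_ik]]].
  have le_m1_M : (m.+1 <= M)%N by rewrite -(prednK M_gt0) ltnS -subn1.
  have j_eq : j = m.+1.
    apply/eqP; rewrite eqn_leq le_j ltnNge; apply: contra ne_ik => le_jm.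
    by apply/eqP/sim_m; exists j.
  apply: HG_cons_eq => [y _|y /(Hx_le_Hm_succ_of_sim sim_m)|]; try lra.
    have := HG_ub y; have := Hm_nonincreasing le_m1_M lt_M_size; lra.
  by exists x; rewrite Hx_cons /Hedge (negbTE ne_ik) Hxj j_eq.
- move=> sim_all; have [x0 HGx0] := HG_attained beta B E.
  have x0_eq : x0 i = x0 k.
    by apply: (sim_all 0%N (leq0n M)); exists 0%N; rewrite -?HGx0.
  apply: HG_cons_eq => [y _|y /(level_gt_of_sim (sim_all M (leqnn M)))|].
  + by have := HG_ub y; lra.
  + move=> [j /andP [lt_Mj lt_j] <-].
    have : Hm beta B E j < HG beta B E - 2 * beta.
      by rewrite ltNge; apply: contraTN lt_Mj => /(maxM _ lt_j); rewrite -leqNgt.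
    lra.
  + by exists x0; rewrite Hx_cons /Hedge x0_eq eqxx -HGx0.
Qed.
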